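(* Let $m,n\ge 1$ be integers, let $\mathbf{x}=(x_1,\dots,x_n)\in\mathbb{R}^n$ be fixed, and let $W=(w_{ij}), H=(h_{ij})\in\mathbb{R}^{m\times n}$. For $1\le i\le m$ define $\varphi_{\mathbf{x},i}(W)=\max_{1\le j\le n}(w_{ij}+x_j)$, let $J_i=\{j\in\{1,\dots,n\}: \varphi_{\mathbf{x},i}(W)=w_{ij}+x_j\}$, and let $K_i=\{k\in\{1,\dots,n\}: h_{ik}>\max_{j\in J_i}h_{ij}\}$. Define $$\epsilon_i=\min_{k\in K_i}\frac{\varphi_{\mathbf{x},i}(W)-(w_{ik}+x_k)}{h_{ik}-\max_{j\in J_i}h_{ij}},\qquad 1\le i\le m,$$ (with the convention that the minimum over the empty set is $+\infty$) and $\epsilon=\min_{1\le i\le m}\epsilon_i$. Let $\delta_{\mathbf{x}}:\mathbb{R}^{m\times n}\to\mathbb{R}^m$ be $\delta_{\mathbf{x}}(W)=(\varphi_{\mathbf{x},i}(W))_{1\le i\le m}$. Then for every $\eta\in\mathbb{R}^+=[0,\infty)$, $$\eta\in[0,\epsilon]\iff \delta_{\mathbf{x}}(W+\eta H)=\delta_{\mathbf{x}}(W)+\eta\Big(\max_{j\in J_i}h_{ij}\Big)_{1\le i\le m}.$$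
   Context: $\delta_{\mathbf{x}}$ is the dilation layer viewed as a function of its weight matrix $W$ for fixed input $\mathbf{x}$: its $i$-th output is $\max_{1\le k\le n}(x_k+w_{ik})$. When $K_i$ is empty, $\epsilon_i=+\infty$ and $[0,\epsilon]$ is understood as $[0,\infty)$ if $\epsilon=+\infty$. *)

From HB Require Import structures.
From mathcomp Require Import all_boot all_order all_algebra.
From mathcomp Require Import reals constructive_ereal.
Set Implicit Arguments. Unset Strict Implicit. Unset Printing Implicit Defensive.
Import Order.TTheory GRing.Theory Num.Theory.
Local Open Scope ring_scope.

Section Dil.
Variable R : realType.

(* Maximum of F over a finite set A; meaningful (= true maximum) when A is
   nonempty; the value 0 on the empty set is never used. *)
Definition setmax (I : finType) (A : {set I}) (F : I -> R) : R :=
  match [pick j in A] with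
  | Some j0 => \big[Num.max/F j0]_(j in A) F j
  | None => 0
  end.

Variables (m n : nat) (x : 'rV[R]_n).

Definition phi (W : 'M[R]_(m, n)) (i : 'I_m) : R :=
  setmax [set: 'I_n] (fun j => W i j + x 0 j).

Definition delta (W : 'M[R]_(m, n)) : 'cV[R]_m := \col_i phi W i.

Definition Jset (W : 'M[R]_(m, n)) (i : 'I_m) : {set 'I_n} :=
  [set j | phi W i == W i j + x 0 j].

Definition maxJ (W H : 'M[R]_(m, n)) (i : 'I_m) : R :=
  setmax (Jset W i) (fun j => H i j).

Definition Kset (W H : 'M[R]_(m, n)) (i : 'I_m) : {set 'I_n} :=
  [set k | H i k > maxJ W H i].

Definition eps_i (W H : 'M[R]_(m, n)) (i : 'I_m) : \bar R :=
  \big[Order.min/+oo%E]_(k in Kset W H i)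
     (((phi W i - (W i k + x 0 k)) / (H i k - maxJ W H i))%:E).

Definition eps (W H : 'M[R]_(m, n)) : \bar R :=
  \big[Order.min/+oo%E]_(i < m) eps_i W H i.

End Dil.

From HB Require Import structures.
From mathcomp Require Import all_boot all_order all_algebra.
From mathcomp Require Import reals constructive_ereal.
From mathcomp Require Import lra.
Set Implicit Arguments.
Unset Strict Implicit.
Unset Printing Implicit Defensive.

Import Order.TTheory GRing.Theory Num.Theory.
Local Open Scope ring_scope.

(* Row by row: choosing j in J_i with h_ij maximal gives
   phi_i(W + eta H) >= phi_i(W) + eta max_J h_i for every eta.  An index k
   beats this bound iff w_ik + x_k + eta h_ik > phi_i(W) + eta max_J h_i;
   for h_ik <= max_J h_i this is impossible when eta >= 0 (since
   w_ik + x_k <= phi_i(W)), and for k in K_i it says exactly that eta exceeds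
   the k-th ratio defining epsilon_i.  So row i satisfies the identity iff
   eta <= epsilon_i, and all rows do iff eta <= epsilon. *)

Section SetMax.
Variables (R : realType) (I : finType) (A : {set I}) (F : I -> R).

Lemma le_setmax j : j \in A -> F j <= setmax A F.
Proof.
move=> Aj; rewrite /setmax; case: pickP => [j0 _|/(_ j)]; last by rewrite Aj.
exact: le_bigmax_cond.
Qed.

Lemma setmax_attained : A != set0 -> exists2 j, j \in A & setmax A F = F j.
Proof.
case/set0Pn => j0 Aj0; rewrite /setmax; case: pickP => [j1 Aj1|/(_ j0)];
  last by rewrite Aj0.
apply: (big_ind (fun v => exists2 j, j \in A & v = F j)) => [|a b|j Aj].
- by exists j1.
- by move=> [ja Aja ->] [jb Ajb ->]; case: leP; [exists jb | exists ja].
- by exists j.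
Qed.

End SetMax.

Section DilationRow.
Variables (R : realType) (m n : nat) (x : 'rV[R]_n) (W H : 'M[R]_(m, n)).
Variable i : 'I_m.
Hypothesis n_gt0 : (0 < n)%N.

Lemma le_phi (V : 'M[R]_(m, n)) j : V i j + x 0 j <= phi x V i.
Proof. by apply: le_setmax; rewrite inE. Qed.

Lemma phi_attained (V : 'M[R]_(m, n)) : exists j, phi x V i = V i j + x 0 j.
Proof.
have setT_neq0 : [set: 'I_n] != set0 by apply/set0Pn; exists (Ordinal n_gt0).
have [j _ phiE] := setmax_attained (fun j => V i j + x 0 j) setT_neq0.
by exists j.
Qed.

Lemma Jset_neq0 : Jset x W i != set0.
Proof.
by have [j phiE] := phi_attained W; apply/set0Pn; exists j; rewrite inE phiE.
Qed.

Lemma maxJ_attained : exists2 j, j \in Jset x W i & maxJ x W H i = H i j.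
Proof. exact: setmax_attained Jset_neq0. Qed.

Lemma phi_shift_ge eta :
  phi x W i + eta * maxJ x W H i <= phi x (W + eta *: H) i.
Proof.
have [j Jj ->] := maxJ_attained; move: Jj; rewrite inE => /eqP ->.
by apply: le_trans (le_phi _ j); rewrite !mxE addrAC.
Qed.

Lemma phi_shift_le eta : 0 <= eta -> (eta%:E <= eps_i x W H i)%E ->
  phi x (W + eta *: H) i <= phi x W i + eta * maxJ x W H i.
Proof.
move=> eta_ge0 /bigmin_geP[_ le_eta_ratio].
have [j ->] := phi_attained (W + eta *: H); rewrite !mxE; have := le_phi W j.
case: (leP (H i j) (maxJ x W H i)) => [hj|hj].
- by have := ler_wpM2l eta_ge0 hj; lra.
- have := le_eta_ratio j; rewrite inE hj lee_fin ler_pdivlMr ?subr_gt0 //.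
  by move/(_ isT); lra.
Qed.

Lemma le_eps_i_phi_shift eta :
  phi x (W + eta *: H) i = phi x W i + eta * maxJ x W H i ->
  (eta%:E <= eps_i x W H i)%E.
Proof.
move=> phiE; apply/bigmin_geP; split=> [|k]; first by rewrite leey.
rewrite inE => hk; rewrite lee_fin ler_pdivlMr ?subr_gt0 //.
by have := le_phi (W + eta *: H) k; rewrite phiE !mxE; lra.
Qed.

Lemma phi_shiftP eta : 0 <= eta ->
  (eta%:E <= eps_i x W H i)%E <->
  phi x (W + eta *: H) i = phi x W i + eta * maxJ x W H i.
Proof.
move=> eta_ge0; split; last exact: le_eps_i_phi_shift.
by move=> le_eta; apply/le_anti; rewrite phi_shift_ge phi_shift_le.
Qed.

End DilationRow.

Theorem proposition1 (R : realType) (m n : nat) (hm : (0 < m)%N) (hn : (0 < n)%N)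
  (x : 'rV[R]_n) (W H : 'M[R]_(m, n)) (eta : R) (heta : 0 <= eta) :
  ((eta%:E <= eps x W H)%E) <->
  delta x (W + eta *: H) = delta x W + eta *: \col_i maxJ x W H i.
Proof.
split=> [/bigmin_geP[_ le_eta] | deltaE].
- apply/colP => i; rewrite !mxE.
  by apply/(phi_shiftP x W H i hn heta); apply: le_eta.
- apply/bigmin_geP; split=> [|i _]; first by rewrite leey.
  apply/(phi_shiftP x W H i hn heta).
  by move/colP: deltaE => /(_ i); rewrite !mxE.
Qed.
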